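(* Let $(R,\mathfrak{m})$ be a Noetherian local ring and let $I$ be an ideal of $R$. Let $x_1,\ldots,x_s,y$ be a minimal generating set of $I$ and $J=(x_1,\ldots,x_s)$. Then, for each integer $n\geq 2$, there is a short exact sequence of $R$-modules $$0\to \frac{H_1(x_1t,\ldots,x_st;\mathbf{R}(I))_n}{yt\,H_1(x_1t,\ldots,x_st;\mathbf{R}(I))_{n-1}}\longrightarrow H_1(x_1t,\ldots,x_st,yt;\mathbf{R}(I))_n\stackrel{\sigma_n}{\longrightarrow}\frac{JI^{n-1}:y^n}{JI^{n-2}:y^{n-1}}\to 0,$$ where $\sigma_n$ sends the homology class of a cycle $(w_1t^{n-1},\ldots,w_st^{n-1},w_{s+1}t^{n-1})$, $w_i\in I^{n-1}$, to the class of $a\in (JI^{n-1}:y^n)$, where $a\in R$ is such that $w_{s+1}=ay^{n-1}+b$ for some $b\in JI^{n-2}$.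
   Context: $\mathbf{R}(I)=\bigoplus_{n\geq0}I^nt^n$ is the Rees algebra; $I^0=R$. For elements $z_1,\ldots,z_m$ of degree one of a graded ring $U=\bigoplus_n U_n$ (here $U=\mathbf{R}(I)$), $H_1(z_1,\ldots,z_m;U)_n$ is the first homology of the graded Koszul complex in degree $n$: $\wedge_2(R^m)\otimes U_{n-2}\xrightarrow{\partial_2}\wedge_1(R^m)\otimes U_{n-1}\xrightarrow{\partial_1}U_n$, with $\partial_2(e_i\wedge e_j\otimes u)=e_j\otimes z_iu-e_i\otimes z_ju$ and $\partial_1(e_i\otimes v)=z_iv$, where $e_1,\ldots,e_m$ is the standard basis of $R^m$. Thus cycles in degree $n$ are $m$-tuples in $U_{n-1}^m$. *)

(* Ideals of a commutative ring are represented as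
   Prop-valued subsets R -> Prop; Koszul homology is described through
   explicit cycles and boundaries. *)
From HB Require Import structures.
From mathcomp Require Import all_boot all_order all_algebra.
Set Implicit Arguments. Unset Strict Implicit. Unset Printing Implicit Defensive.
Import GRing.Theory.
Local Open Scope ring_scope.

Section IdealDefs.
Variable R : comNzRingType.

Definition is_ideal (A : R -> Prop) : Prop :=
  [/\ A 0, (forall a b, A a -> A b -> A (a + b)) & (forall r a, A a -> A (r * a))].

Definition ideal_gen (m : nat) (g : 'I_m -> R) : R -> Prop :=
  fun r => exists c : 'I_m -> R, r = \sum_(i < m) c i * g i.

Definition idealM (A B : R -> Prop) : R -> Prop :=
  fun r => exists (k : nat) (a b : 'I_k -> R),
    [/\ forall i, A (a i), forall i, B (b i) & r = \sum_(i < k) a i * b i].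

Definition idealX (A : R -> Prop) (n : nat) : R -> Prop :=
  iter n (idealM A) (fun _ => True).

Definition colon (A : R -> Prop) (c : R) : R -> Prop := fun r => A (r * c).

Definition noetherian : Prop :=
  forall A : R -> Prop, is_ideal A ->
    exists (m : nat) (g : 'I_m -> R), forall r, A r <-> ideal_gen g r.

Definition local_ring : Prop :=
  exists M : R -> Prop, [/\ is_ideal M, ~ M 1 &
    forall A : R -> Prop, is_ideal A -> ~ A 1 -> forall r, A r -> M r].

Definition min_gens (m : nat) (g : 'I_m -> R) : Prop :=
  forall i : 'I_m, ~ (exists c : 'I_m -> R, g i = \sum_(j < m | j != i) c j * g j).

Definition extend (s : nat) (g : 'I_s -> R) (y : R) : 'I_s.+1 -> R :=
  fun i => match unlift ord_max i with Some j => g j | None => y end.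

(* Koszul complex of z_1 t, ..., z_m t on the Rees algebra R(I), degree n.
   A 1-chain in degree n is an m-tuple w with w_i t^(n-1), w_i in I^(n-1)
   (the component U_(n-1) is 0 when n = 0). *)
Definition kchain (m : nat) (I : R -> Prop) (n : nat) (w : 'I_m -> R) : Prop :=
  forall i, w i = 0 \/ ((1 <= n)%N /\ idealX I (n - 1) (w i)).

(* 1-cycles in degree n: kernel of d_1 (e_i (x) v |-> z_i v). *)
Definition kcycle (m : nat) (z : 'I_m -> R) (I : R -> Prop) (n : nat)
  (w : 'I_m -> R) : Prop :=
  kchain I n w /\ \sum_(i < m) z i * w i = 0.

(* 1-boundaries in degree n: image of d_2 applied to
   sum_(i,j) e_i /\ e_j (x) u_ij t^(n-2), with u_ij in I^(n-2)
   (U_(n-2) = 0 when n < 2);  d_2(e_i/\e_j (x) u) = e_j (x) z_i u - e_i (x) z_j u. *)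
Definition kbound (m : nat) (z : 'I_m -> R) (I : R -> Prop) (n : nat)
  (w : 'I_m -> R) : Prop :=
  exists u : 'I_m -> 'I_m -> R,
    (forall i j, u i j = 0 \/ ((2 <= n)%N /\ idealX I (n - 2) (u i j))) /\
    forall k, w k = \sum_(i < m) z i * u i k - \sum_(j < m) z j * u k j.

End IdealDefs.

(* sigma_n reads off the coefficient of y^(n-1) in the last entry of a cycle,
   modulo J I^(n-2); it exists because I = J + (y).  The cycle condition
   x.w' + y w_(s+1) = 0 puts a y^n in J I^(n-1), and a boundary has last entry
   in J I^(n-2).  On the kernel the last entry is some x.d with d in I^(n-2);
   subtracting the boundary of the matrix with last column d leaves a cycle
   (v, 0) from H_1(x t).  If (v, 0) is the boundary of a matrix U, the last row
   minus the last column of U is a cycle v' of degree n - 1 and v - y v' is a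
   boundary of x t.  None of this uses that R is Noetherian local or that the
   generators are minimal. *)

From HB Require Import structures.
From mathcomp Require Import all_boot all_order all_algebra.
From mathcomp Require Import ring.
Set Implicit Arguments. Unset Strict Implicit. Unset Printing Implicit Defensive.
Import GRing.Theory.
Local Open Scope ring_scope.

Section Ideals.
Variable R : comNzRingType.
Implicit Types (A B C : R -> Prop) (a b c r : R).

Section IdealClosure.
Variables (A : R -> Prop) (idA : is_ideal A).

Lemma ideal0 : A 0.
Proof. by case: idA. Qed.

Lemma idealD a b : A a -> A b -> A (a + b).
Proof. by case: idA => _ + _; apply. Qed.

Lemma idealMl r a : A a -> A (r * a).
Proof. by case: idA => _ _; apply. Qed.

Lemma idealN a : A a -> A (- a).
Proof. by rewrite -mulN1r; apply: idealMl. Qed.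

Lemma idealB a b : A a -> A b -> A (a - b).
Proof. by move=> Aa Ab; apply/idealD/idealN. Qed.

Lemma ideal_or0 a : a = 0 \/ A a <-> A a.
Proof. by split=> [[->|//] | ?]; [exact: ideal0 | right]. Qed.

Lemma ideal_sum k (F : 'I_k -> R) : (forall i, A (F i)) -> A (\sum_(i < k) F i).
Proof. by move=> AF; apply: (big_ind A) => //; [apply: ideal0 | apply: idealD]. Qed.

End IdealClosure.

Lemma ideal_gen_ideal m (g : 'I_m -> R) : is_ideal (ideal_gen g).
Proof.
split.
- by exists (fun=> 0); rewrite big1 // => i _; rewrite mul0r.
- move=> _ _ [c ->] [d ->]; exists (fun i => c i + d i).
  by rewrite -big_split; apply: eq_bigr => i _; rewrite mulrDl.
- move=> r _ [c ->]; exists (fun i => r * c i).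
  by rewrite mulr_sumr; apply: eq_bigr => i _; rewrite mulrA.
Qed.

Lemma ideal_gen_mem m (g : 'I_m -> R) i : ideal_gen g (g i).
Proof.
exists (fun j => (j == i)%:R).
by rewrite (bigD1 i) //= eqxx mul1r big1 ?addr0 // => j /negbTE->; rewrite mul0r.
Qed.

Lemma idealM_mem A B a b : A a -> B b -> idealM A B (a * b).
Proof. by move=> Aa Bb; exists 1%N, (fun=> a), (fun=> b); rewrite big_ord1. Qed.

Lemma idealM_ideal A B : is_ideal A -> is_ideal (idealM A B).
Proof.
move=> idA; split.
- by exists 0%N, (fun=> 0), (fun=> 0); split=> [[]|[]|]; rewrite ?big_ord0.
- move=> _ _ [k [a [b [Aa Bb ->]]]] [k' [a' [b' [Aa' Bb' ->]]]].
  pose cat (f : 'I_k -> R) (f' : 'I_k' -> R) i :=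
    match split i with inl j => f j | inr j => f' j end.
  exists (k + k')%N, (cat a a'), (cat b b'); split.
  + by move=> i; rewrite /cat; case: (split i).
  + by move=> i; rewrite /cat; case: (split i).
  + rewrite big_split_ord /cat; congr (_ + _); apply: eq_bigr => i _.
    * by rewrite -[lshift _ _]/(unsplit (inl i)) unsplitK.
    * by rewrite -[rshift _ _]/(unsplit (inr i)) unsplitK.
- move=> r _ [k [a [b [Aa Bb ->]]]]; exists k, (fun i => r * a i), b; split => //.
  + by move=> i; apply: idealMl.
  + by rewrite mulr_sumr; apply: eq_bigr => i _; rewrite mulrA.
Qed.

Lemma idealX_ideal A k : is_ideal A -> is_ideal (idealX A k).
Proof. by case: k => [|k] idA; [split | apply: idealM_ideal]. Qed.

Lemma idealM_mulA A B C c r : C c -> idealM A B r -> idealM A (idealM C B) (c * r).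
Proof.
move=> Cc [k [a [b [Aa Bb ->]]]]; exists k, a, (fun i => c * b i); split => //.
- by move=> i; apply: idealM_mem.
- by rewrite mulr_sumr; apply: eq_bigr => i _; ring.
Qed.

Lemma idealM_min A B C : is_ideal C -> (forall a b, A a -> B b -> C (a * b)) ->
  forall r, idealM A B r -> C r.
Proof.
move=> idC ABC _ [k [a [b [Aa Bb ->]]]].
by apply: (ideal_sum idC) => i; apply: ABC.
Qed.

Lemma idealM_genP {B} : is_ideal B -> forall {m} {g : 'I_m -> R} {r},
  idealM (ideal_gen g) B r <->
  exists c : 'I_m -> R, (forall i, B (c i)) /\ r = \sum_(i < m) g i * c i.
Proof.
move=> idB m g r; split=> [[k [a [b [Aa Bb ->]]]] | [c [Bc ->]]]; last first.
  apply: ideal_sum => [|i]; first exact/idealM_ideal/ideal_gen_ideal.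
  exact/idealM_mem/Bc/ideal_gen_mem.
have [e Ee] : exists e : 'I_k -> 'I_m -> R, forall j, a j = \sum_(i < m) e j i * g i.
  exact: fin_all_exists Aa.
have Bc i : B (\sum_(j < k) e j i * b j).
  by apply: (ideal_sum idB) => j; apply: idealMl.
exists (fun i => \sum_(j < k) e j i * b j); split=> //.
under eq_bigr => j _ do rewrite Ee mulr_suml.
rewrite exchange_big; apply: eq_bigr => i _; rewrite mulr_sumr.
by apply: eq_bigr => j _; ring.
Qed.

End Ideals.

Section Koszul.
Variable R : comNzRingType.
Implicit Types A : R -> Prop.

Definition koszul_d2 m (z : 'I_m -> R) (u : 'I_m -> 'I_m -> R) (k : 'I_m) : R :=
  \sum_(i < m) z i * u i k - \sum_(j < m) z j * u k j.

Lemma eq_koszul_d2 m (z : 'I_m -> R) u u' : u =2 u' -> koszul_d2 z u =1 koszul_d2 z u'.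
Proof.
by move=> eq_u k; rewrite /koszul_d2; congr (_ - _); apply: eq_bigr => i _; rewrite eq_u.
Qed.

Lemma kchainSP {A} : is_ideal A -> forall {n m} {w : 'I_m -> R},
  kchain A n.+1 w <-> forall i, idealX A n (w i).
Proof.
move=> idA n m w; rewrite /kchain subn1; split=> Aw i; last by right.
by apply/(ideal_or0 (idealX_ideal n idA)); case: (Aw i) => [|[]]; [left | right].
Qed.

Lemma kboundSSP {A} : is_ideal A -> forall {n m} {z w : 'I_m -> R},
  kbound z A n.+2 w <->
  exists u, (forall i j, idealX A n (u i j)) /\ w =1 koszul_d2 z u.
Proof.
move=> idA n m z w; rewrite /kbound subn2; split=> -[u [Au Ew]]; exists u; split=> // i j.
  by apply/(ideal_or0 (idealX_ideal n idA)); case: (Au i j) => [|[]]; [left | right].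
by right.
Qed.

Section Extend.
Variables (s : nat) (x : 'I_s -> R) (y : R).

Lemma extend_lift (g : 'I_s -> R) c i : extend g c (lift ord_max i) = g i.
Proof. by rewrite /extend liftK. Qed.

Lemma extend_max (g : 'I_s -> R) c : extend g c ord_max = c.
Proof. by rewrite /extend unlift_none. Qed.

Lemma big_extend (g : 'I_s -> R) c (F : 'I_s.+1 -> R) :
  \sum_(i < s.+1) extend g c i * F i =
  \sum_(i < s) g i * F (lift ord_max i) + c * F ord_max.
Proof.
rewrite big_ord_recr extend_max; congr (_ + _); apply: eq_bigr => i _.
have -> : widen_ord (leqnSn s) i = lift ord_max i by apply/val_inj/esym/lift_max.
by rewrite extend_lift.
Qed.

Lemma koszul_d2_extend_lift U k :
  koszul_d2 (extend x y) U (lift ord_max k) =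
  koszul_d2 x (fun i j => U (lift ord_max i) (lift ord_max j)) k
    + y * (U ord_max (lift ord_max k) - U (lift ord_max k) ord_max).
Proof. by rewrite /koszul_d2 !big_extend; ring. Qed.

Lemma koszul_d2_extend_max U :
  koszul_d2 (extend x y) U ord_max =
  \sum_(i < s) x i * (U (lift ord_max i) ord_max - U ord_max (lift ord_max i)).
Proof.
rewrite /koszul_d2 !big_extend; under [RHS]eq_bigr do rewrite mulrBr.
by rewrite sumrB; ring.
Qed.

Lemma kcycle_extend A n w : kcycle (extend x y) A n w <->
  kchain A n w /\ \sum_(i < s) x i * w (lift ord_max i) + y * w ord_max = 0.
Proof. by rewrite /kcycle big_extend. Qed.

Definition border (u : 'I_s -> 'I_s -> R) (c : 'I_s -> R) : 'I_s.+1 -> 'I_s.+1 -> R :=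
  fun i => if unlift ord_max i is Some a then extend (u a) (c a) else fun=> 0.

Lemma border_lift u c i j : border u c (lift ord_max i) (lift ord_max j) = u i j.
Proof. by rewrite /border liftK extend_lift. Qed.

Lemma border_lift_max u c i : border u c (lift ord_max i) ord_max = c i.
Proof. by rewrite /border liftK extend_max. Qed.

Lemma border_max u c j : border u c ord_max j = 0.
Proof. by rewrite /border unlift_none. Qed.

Lemma border_mem A u c : is_ideal A ->
  (forall i j, A (u i j)) -> (forall i, A (c i)) -> forall i j, A (border u c i j).
Proof.
move=> idA Au Ac i j; case: (unliftP ord_max i) => [i' ->|->]; last first.
  by rewrite border_max; apply: ideal0.
by case: (unliftP ord_max j) => [j' ->|->]; rewrite ?border_lift ?border_lift_max.
Qed.

Lemma koszul_d2_border_lift u c k :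
  koszul_d2 (extend x y) (border u c) (lift ord_max k) = koszul_d2 x u k - y * c k.
Proof.
rewrite koszul_d2_extend_lift border_max border_lift_max.
by rewrite (eq_koszul_d2 _ (border_lift u c)); ring.
Qed.

Lemma koszul_d2_border_max u c :
  koszul_d2 (extend x y) (border u c) ord_max = \sum_(i < s) x i * c i.
Proof.
rewrite koszul_d2_extend_max; apply: eq_bigr => i _.
by rewrite border_lift_max border_max subr0.
Qed.

End Extend.
End Koszul.

Section ReesKoszul.
Variables (R : comNzRingType) (s : nat) (x : 'I_s -> R) (y : R).
Local Notation z := (extend x y).
Local Notation I := (ideal_gen (extend x y)).
Local Notation J := (ideal_gen x).
Local Notation JI m := (idealM (ideal_gen x) (idealX (ideal_gen (extend x y)) m)).

Let idI : is_ideal I := ideal_gen_ideal z.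

Lemma idealX_I_ideal m : is_ideal (idealX I m).
Proof. exact: idealX_ideal. Qed.

Lemma JI_ideal m : is_ideal (JI m).
Proof. exact/idealM_ideal/ideal_gen_ideal. Qed.

Lemma ideal_gen_extend_y : I y.
Proof. by have := ideal_gen_mem z ord_max; rewrite extend_max. Qed.

Lemma idealX_I_expr m : idealX I m (y ^+ m).
Proof. by elim: m => [|m IHm] //; rewrite exprS; apply: idealM_mem ideal_gen_extend_y IHm. Qed.

Lemma ideal_gen_extend_dec r : I r -> exists a b, J b /\ r = a * y + b.
Proof.
case=> c ->; under eq_bigr do rewrite mulrC.
rewrite big_extend.
exists (c ord_max), (\sum_(i < s) c (lift ord_max i) * x i); split.
  by exists (fun i => c (lift ord_max i)).
by rewrite addrC mulrC; congr (_ + _); apply: eq_bigr => i _; rewrite mulrC.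
Qed.

Lemma JI_sum m (c : 'I_s -> R) :
  (forall i, idealX I m (c i)) -> JI m (\sum_(i < s) x i * c i).
Proof. by move=> Ic; apply/(idealM_genP (idealX_I_ideal m)); exists c. Qed.

Definition ycoef m r a := exists b, JI m b /\ r = a * y ^+ m.+1 + b.

Lemma ycoef0 m : ycoef m 0 0.
Proof. by exists 0; split; [apply: ideal0 (JI_ideal m) | rewrite mul0r addr0]. Qed.

Lemma ycoef_linear m c r r' a a' : ycoef m r a -> ycoef m r' a' ->
  ycoef m (c * r + r') (c * a + a').
Proof.
move=> [b [JIb ->]] [b' [JIb' ->]]; exists (c * b + b'); split; last by ring.
by apply: (idealD (JI_ideal m)) => //; apply: (idealMl (JI_ideal m)).
Qed.

Lemma ycoef_JI m r a : ycoef m r a -> JI m r <-> JI m (a * y ^+ m.+1).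
Proof.
move=> [b [JIb ->]]; split=> [JIr|JIa]; last exact: (idealD (JI_ideal m) JIa JIb).
by rewrite -(addrK b (a * _)); exact: (idealB (JI_ideal m) JIr JIb).
Qed.

Lemma ycoef_exists m : forall r, idealX I m.+1 r -> exists a, ycoef m r a.
Proof.
have idD k : is_ideal (fun r => exists a, ycoef k r a).
  split; first by exists 0; apply: ycoef0.
  - move=> u v [a Ha] [a' Ha']; exists (1 * a + a').
    by rewrite -[u]mul1r; apply: ycoef_linear.
  - move=> c u [a Ha]; exists (c * a + 0).
    by rewrite -[c * u]addr0; apply: ycoef_linear (ycoef0 k).
elim: m => [|m IHm]; apply: (idealM_min (idD _)) => p q Ip Iq;
  have [al [be [Jbe Ep]]] := ideal_gen_extend_dec Ip.
  exists (al * q), (be * q); split; first exact: idealM_mem.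
  by rewrite Ep expr1; ring.
have [a [b [JIb ->]]] := IHm q Iq.
exists (al * a), (be * (a * y ^+ m.+1) + p * b).
split; last by rewrite Ep [y ^+ m.+2]exprS; ring.
apply: (idealD (JI_ideal _)); last exact: idealM_mulA.
apply: idealM_mem Jbe _; apply: (idealMl (idealX_I_ideal _)); apply: idealX_I_expr.
Qed.

Lemma kchain_extend0 n (v : 'I_s -> R) : kchain I n v -> kchain I n (extend v 0).
Proof.
move=> chv i; case: (unliftP ord_max i) => [j ->|->].
  by rewrite extend_lift; apply: chv.
by rewrite extend_max; left.
Qed.

Lemma kcycle_extend0 n v : kcycle x I n v -> kcycle z I n (extend v 0).
Proof.
case=> chv sv; apply/kcycle_extend; split; first exact: kchain_extend0.
by under eq_bigr do rewrite extend_lift; rewrite extend_max mulr0 addr0.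
Qed.

Lemma kcycle_y_max m w : kcycle z I m.+2 w -> JI m.+1 (y * w ord_max).
Proof.
case/kcycle_extend => /(kchainSP idI) Iw /eqP.
rewrite addrC addr_eq0 => /eqP ->.
by apply: (idealN (JI_ideal _)); apply: JI_sum.
Qed.

Lemma kbound_max m w : kbound z I m.+2 w -> JI m (w ord_max).
Proof.
case/(kboundSSP idI) => U [IU ->].
by rewrite koszul_d2_extend_max; apply: JI_sum => i; apply: (idealB (idealX_I_ideal m)).
Qed.

Lemma colon_JI_S m a : colon (JI m) (y ^+ m.+1) a -> colon (JI m.+1) (y ^+ m.+2) a.
Proof. by rewrite /colon [y ^+ m.+2]exprS mulrCA; apply: idealM_mulA ideal_gen_extend_y. Qed.

Lemma ycoef_kcycle m w : kcycle z I m.+2 w -> exists a, ycoef m (w ord_max) a.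
Proof. by case=> /(kchainSP idI) Iw _; apply: ycoef_exists. Qed.

Lemma ycoef_colon m w a : kcycle z I m.+2 w -> ycoef m (w ord_max) a ->
  colon (JI m.+1) (y ^+ m.+2) a.
Proof.
move=> /kcycle_y_max JIyw [b [JIb Ew]]; rewrite /colon.
have -> : a * y ^+ m.+2 = y * w ord_max - y * b by rewrite Ew [y ^+ m.+2]exprS; ring.
exact: (idealB (JI_ideal _) JIyw (idealM_mulA ideal_gen_extend_y JIb)).
Qed.

Lemma ycoef_kbound m w w' a a' : kbound z I m.+2 (fun k => w k - w' k) ->
  ycoef m (w ord_max) a -> ycoef m (w' ord_max) a' -> colon (JI m) (y ^+ m.+1) (a - a').
Proof.
move=> /kbound_max /= JIw Ha Ha'; have := ycoef_linear (-1) Ha' Ha.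
by rewrite !mulN1r ![- _ + _]addrC /colon => /ycoef_JI <-.
Qed.

Lemma ycoef_surj m a : colon (JI m.+1) (y ^+ m.+2) a ->
  exists w, kcycle z I m.+2 w /\ ycoef m (w ord_max) a.
Proof.
case/(idealM_genP (idealX_I_ideal _)) => c [Ic Ea].
exists (extend (fun i => - c i) (a * y ^+ m.+1)); split.
  apply/kcycle_extend; split.
    apply/(kchainSP idI) => i.
    case: (unliftP ord_max i) => [j ->|->]; rewrite ?extend_lift ?extend_max.
      exact: (idealN (idealX_I_ideal _)).
    by apply: (idealMl (idealX_I_ideal _)); apply: idealX_I_expr.
  under eq_bigr do rewrite extend_lift mulrN.
  by rewrite extend_max sumrN mulrCA -exprS -Ea addNr.
by exists 0; split; [apply: ideal0 (JI_ideal m) | rewrite extend_max addr0].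
Qed.

Lemma ycoef_ker m w a : kcycle z I m.+2 w -> ycoef m (w ord_max) a ->
  colon (JI m) (y ^+ m.+1) a ->
  exists v, kcycle x I m.+2 v /\ kbound z I m.+2 (fun k => w k - extend v 0 k).
Proof.
move=> /kcycle_extend [/(kchainSP idI) Iw sw] Ha.
move=> /(ycoef_JI Ha)/(idealM_genP (idealX_I_ideal m)) [d [Id Ew]].
exists (fun k => w (lift ord_max k) + y * d k); split.
  split.
    apply/(kchainSP idI) => i; apply: (idealD (idealX_I_ideal _) (Iw _)).
    exact: idealM_mem ideal_gen_extend_y (Id i).
  under eq_bigr do rewrite mulrDr mulrCA.
  by rewrite big_split -mulr_sumr -Ew.
apply/(kboundSSP idI); exists (border (fun _ _ => 0) d); split.
  by apply: border_mem (idealX_I_ideal m) _ Id => i j; apply: ideal0 (idealX_I_ideal m).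
move=> k; case: (unliftP ord_max k) => [j ->|->].
  have d2_0 : koszul_d2 x (fun _ _ => 0) j = 0.
    by rewrite /koszul_d2 !big1 ?subr0 // => i _; rewrite mulr0.
  by rewrite koszul_d2_border_lift d2_0 extend_lift; ring.
by rewrite koszul_d2_border_max extend_max subr0.
Qed.

Lemma kbound_extend0P m v : kcycle x I m.+2 v ->
  kbound z I m.+2 (extend v 0) <->
  exists v', kcycle x I m.+1 v' /\ kbound x I m.+2 (fun k => v k - y * v' k).
Proof.
case=> _ sv; split.
  case/(kboundSSP idI) => U [IU Ev].
  exists (fun k => U ord_max (lift ord_max k) - U (lift ord_max k) ord_max); split.
    split; first by apply/(kchainSP idI) => i; apply: (idealB (idealX_I_ideal m)).
    have := Ev ord_max; rewrite extend_max koszul_d2_extend_max => d2U0.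
    rewrite -[RHS]oppr0 [in RHS]d2U0 -sumrN.
    by apply: eq_bigr => i _; rewrite -mulrN opprB.
  apply/(kboundSSP idI); exists (fun i j => U (lift ord_max i) (lift ord_max j)); split=> // k.
  by have := Ev (lift ord_max k); rewrite extend_lift koszul_d2_extend_lift => ->; ring.
case=> v' [[/(kchainSP idI) Iv' sv'] /(kboundSSP idI) [u [Iu Ev]]].
apply/(kboundSSP idI); exists (border u (fun i => - v' i)); split.
  by apply: border_mem (idealX_I_ideal m) Iu _ => i; apply: (idealN (idealX_I_ideal m)).
move=> k; case: (unliftP ord_max k) => [j ->|->].
  by rewrite koszul_d2_border_lift -Ev extend_lift; ring.
rewrite koszul_d2_border_max extend_max.
by under eq_bigr do rewrite mulrN; rewrite sumrN sv' oppr0.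
Qed.

End ReesKoszul.

Theorem lemma3p1 (R : comNzRingType) (s : nat) (x : 'I_s -> R) (y : R) (n : nat) :
  noetherian R -> local_ring R -> min_gens (extend x y) -> (2 <= n)%N ->
  let z := extend x y in
  let I := ideal_gen z in
  let J := ideal_gen x in
  (* target module  (J I^(n-1) : y^n) / (J I^(n-2) : y^(n-1)) *)
  let C1 := colon (idealM J (idealX I (n - 1))) (y ^+ n) in
  let C0 := colon (idealM J (idealX I (n - 2))) (y ^+ (n - 1)) in
  (* sig w a : w_(s+1) = a y^(n-1) + b with b in J I^(n-2) *)
  let sig := fun (w : 'I_s.+1 -> R) (a : R) =>
    exists b, idealM J (idealX I (n - 2)) b /\ w ord_max = a * y ^+ (n - 1) + b in
  [/\ (* the quotient makes sense *)
      forall a, C0 a -> C1 a,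
    [/\
      (* sigma_n is defined on every cycle, with values in C1 *)
      forall w, kcycle z I n w -> exists a, sig w a,
      forall w a, kcycle z I n w -> sig w a -> C1 a,
      (* sigma_n is well defined on homology classes (independent of choices) *)
      forall w w' a a', kcycle z I n w -> kcycle z I n w' ->
        kbound z I n (fun k => w k - w' k) -> sig w a -> sig w' a' -> C0 (a - a'),
      (* sigma_n is R-linear *)
      forall r w w' a a', sig w a -> sig w' a' ->
        sig (fun k => r * w k + w' k) (r * a + a') &
      (* sigma_n is surjective *)
      forall a, C1 a -> exists w, kcycle z I n w /\ sig w a] &
      [/\ (* the natural map H_1(xt;R(I))_n -> H_1(xt,yt;R(I))_n, [v] |-> [(v,0)],
             lands in ker sigma_n ... *)
          forall v, kcycle x I n v -> kcycle z I n (extend v 0) /\ sig (extend v 0) 0,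
          (* ... whose image is all of ker sigma_n (exactness in the middle) ... *)
          forall w a, kcycle z I n w -> sig w a -> C0 a ->
            exists v, kcycle x I n v /\ kbound z I n (fun k => w k - extend v 0 k) &
          (* ... and whose kernel is exactly yt H_1(xt;R(I))_(n-1), so that the
             induced map from the quotient is well defined and injective *)
          forall v, kcycle x I n v ->
            (kbound z I n (extend v 0) <->
             exists v', kcycle x I (n - 1) v' /\ kbound x I n (fun k => v k - y * v' k))]].
Proof.
move=> _ _ _; case: n => [|[|m]] // _ z I J C1 C0 sig.
rewrite /sig /C0 /C1 /I /J /z (_ : (m.+2 - 1 = m.+1)%N) // subn2.
split; [exact: colon_JI_S | split | split].
- exact: ycoef_kcycle.
- exact: ycoef_colon.
- by move=> w w' a a' _ _; apply: ycoef_kbound.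
- by move=> r w w' a a'; apply: ycoef_linear.
- exact: ycoef_surj.
- by move=> v /kcycle_extend0 cv; split=> //; rewrite extend_max; apply: ycoef0.
- by move=> w a; apply: ycoef_ker.
- exact: kbound_extend0P.
Qed.
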